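(* Let $a>1$, $d\ge 4$, and let $G$ be generated by the security model $\mathcal{S}(n,a,d)$. Let $\delta_1=\frac{10}{\log^{a-1}n}$ and $T_2=(1-\delta_1)n$. Then with probability $1-o(1)$ both of the following hold: (1) every homochromatic set whose seed node was created at a time step $\le T_2$ has size at least $\log n$; (2) every homochromatic set whose seed node was created at a time step $>T_2$ has size at most $30\log n$.
   Context: Security model $\mathcal{S}(n,a,d)$ (homophyly exponent $a$, natural number $d$): start with an initial graph $G_2$ on two nodes, each of which is a seed node with its own distinct color. For $i=3,\dots,n$, given $G_{i-1}$, let $p_i=(\log i)^{-a}$ and create a new node $v$ (at time step $i$). With probability $p_i$, $v$ receives a brand-new color $c$ and is called the seed node of $c$; then one edge $(v,u)$ is added with $u$ chosen with probability proportional to degrees in $G_{i-1}$, and $d-1$ edges $(v,u_j)$ are added, each $u_j$ chosen uniformly at random among all seed nodes of $G_{i-1}$. Otherwise, $v$ picks a color $c$ uniformly at random among all colors present in $G_{i-1}$, takes color $c$, and $d$ edges $(v,u_j)$ are added, each $u_j$ chosen with probability proportional to degree among the nodes of color $c$ in $G_{i-1}$. The network is $G=G_n$. A homochromatic set is the set of all nodes of $G$ of one color; it is created at the time step its seed node is created. *)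

From Stdlib Require Import Reals List Arith Bool.
Import ListNotations.
Open Scope R_scope.

Definition dist (A : Type) := list (R * A).

Definition dret {A} (x : A) : dist A := [(1, x)].

Definition dbind {A B} (m : dist A) (f : A -> dist B) : dist B :=
  flat_map (fun px => map (fun qy => (fst px * fst qy, snd qy)) (f (snd px))) m.

Definition dbern (p : R) : dist bool := [(p, true); (1 - p, false)].

Definition dweighted {A} (l : list (R * A)) : dist A :=
  let tot := fold_right Rplus 0 (map fst l) in
  map (fun wx => (fst wx / tot, snd wx)) l.

Definition duniform {A} (l : list A) : dist A := dweighted (map (fun x => (1, x)) l).

Fixpoint diid {A} (k : nat) (m : dist A) : dist (list A) :=
  match k with
  | O => dret []
  | S k' => dbind m (fun x => dbind (diid k' m) (fun xs => dret (x :: xs)))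
  end.

Definition prob {A} (m : dist A) (P : A -> bool) : R :=
  fold_right Rplus 0 (map (fun px => if P (snd px) then fst px else 0) m).

(** Node j (0-based) is the node created at time step j+1.  Colors present in
    a graph are 0,...,ncol-1 (every color has exactly one seed node). *)
Record state := mkState {
  col : list nat;
  isseed : list bool;
  edges : list (nat * nat);
  ncol : nat
}.

Definition nodes (s : state) : list nat := seq 0 (length (col s)).

Definition deg (s : state) (u : nat) : nat :=
  length (filter (fun e => orb (Nat.eqb (fst e) u) (Nat.eqb (snd e) u)) (edges s)).

Definition seeds (s : state) : list nat :=
  filter (fun u => nth u (isseed s) false) (nodes s).

Definition of_color (s : state) (c : nat) : list nat :=
  filter (fun u => Nat.eqb (nth u (col s) O) c) (nodes s).

Definition degpick (s : state) (l : list nat) : dist nat :=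
  dweighted (map (fun u => (INR (deg s u), u)) l).

Definition p_new (a : R) (i : nat) : R := Rpower (ln (INR i)) (- a).

(** the step at time i: from G_{i-1} to G_i *)
Definition step (a : R) (d : nat) (i : nat) (s : state) : dist state :=
  let v := length (col s) in
  dbind (dbern (p_new a i)) (fun b =>
    if b then
      dbind (degpick s (nodes s)) (fun u =>
      dbind (diid (d - 1) (duniform (seeds s))) (fun us =>
      dret (mkState (col s ++ [ncol s]) (isseed s ++ [true])
                    (edges s ++ map (fun w => (v, w)) (u :: us)) (S (ncol s)))))
    else
      dbind (duniform (seq 0 (ncol s))) (fun c =>
      dbind (diid d (degpick s (of_color s c))) (fun us =>
      dret (mkState (col s ++ [c]) (isseed s ++ [false])
                    (edges s ++ map (fun w => (v, w)) us) (ncol s))))).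

Definition G2 : state := mkState [0%nat; 1%nat] [true; true] [(0%nat, 1%nat)] 2.

(** gen k = distribution of G_{k+2} *)
Fixpoint gen (a : R) (d : nat) (k : nat) : dist state :=
  match k with
  | O => dret G2
  | S k' => dbind (gen a d k') (step a d (k' + 3))
  end.

Definition SModel (n : nat) (a : R) (d : nat) : dist state := gen a d (n - 2).

Definition seed_time (s : state) (c : nat) : nat :=
  match filter (fun u => andb (nth u (isseed s) false) (Nat.eqb (nth u (col s) O) c)) (nodes s) with
  | u :: _ => S u
  | [] => O
  end.

Definition hsize (s : state) (c : nat) : nat := length (of_color s c).

Definition delta1 (a : R) (n : nat) : R := 10 / Rpower (ln (INR n)) (a - 1).
Definition T2 (a : R) (n : nat) : R := (1 - delta1 a n) * INR n.

Definition Rleb (x y : R) : bool := if Rle_dec x y then true else false.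

Definition good (a : R) (n : nat) (s : state) : bool :=
  forallb (fun c =>
    if Rleb (INR (seed_time s c)) (T2 a n)
    then Rleb (ln (INR n)) (INR (hsize s c))
    else Rleb (INR (hsize s c)) (30 * ln (INR n)))
  (seq 0 (ncol s)).

(* Colors evolve independently of the edges: at time i a new color appears with probability
   p_i, otherwise a uniformly chosen existing color gains a node.  If a counting process N has
   increment probabilities at most (for l > 0) or exactly q_t, then exp (l N - (e^l - 1) sum_t q_t)
   is a supermartingale, because 1 + x <= e^x.  Applied to the number of colors and to the
   number of non-seed nodes of each color, Markov's inequality and a union bound over the n
   colors show that w.h.p. there are at most 2X colors at the end and at least 3X/4 at T2,
   where X = n (ln n)^-a and n - T2 = 10 X ln n.  A color born before T2 then expects at
   least (n - T2)(1 - p)/(2X) >= 9/2 ln n new nodes, hence gets ln n; a color born after T2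
   expects at most (n - T2)/(3X/4) = 40/3 ln n, hence stays below 30 ln n. *)

From Stdlib Require Import Reals List Arith Lia Lra Bool ZArith.
Import ListNotations.
Open Scope R_scope.

Lemma Rinv_nonneg x : 0 <= x -> 0 <= / x.
Proof.
  intros [Hx|<-]; [left; apply Rinv_0_lt_compat; auto | rewrite Rinv_0; lra].
Qed.

Lemma INR_ge3 i : (3 <= i)%nat -> 3 <= INR i.
Proof. intros H; apply le_INR in H; simpl in H; lra. Qed.

Lemma exp_le_compat x y : x <= y -> exp x <= exp y.
Proof. intros [H|<-]; [left; apply exp_increasing; auto | lra]. Qed.

Lemma ln_le_compat x y : 0 < x -> x <= y -> ln x <= ln y.
Proof. intros Hx [H|<-]; [left; apply ln_increasing; auto | lra]. Qed.

Lemma ln_ge1 x : 3 <= x -> 1 <= ln x.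
Proof.
  intros H; rewrite <- (ln_exp 1); apply ln_le_compat; [apply exp_pos|].
  pose proof exp_le_3; lra.
Qed.

Definition expect {A} (m : dist A) (f : A -> R) : R :=
  fold_right Rplus 0 (map (fun px => fst px * f (snd px)) m).

Definition mass {A} (m : dist A) : R := expect m (fun _ => 1).

Definition supp {A} (m : dist A) : list A := map snd m.

Definition nonneg_weights {A} (m : dist A) : Prop := Forall (fun px => 0 <= fst px) m.

Lemma expect_app {A} (m1 m2 : dist A) f : expect (m1 ++ m2) f = expect m1 f + expect m2 f.
Proof.
  unfold expect; induction m1 as [|[w x] m IH]; simpl; [lra|].
  rewrite IH; lra.
Qed.

Lemma expect_scale_map {A B} (w : R) (m : dist A) (h : A -> B) (f : B -> R) :
  expect (map (fun qy => (w * fst qy, h (snd qy))) m) f = w * expect m (fun y => f (h y)).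
Proof.
  unfold expect; induction m as [|[q y] m IH]; simpl; [lra|].
  rewrite IH; lra.
Qed.

Lemma expect_dbind {A B} (m : dist A) (g : A -> dist B) f :
  expect (dbind m g) f = expect m (fun x => expect (g x) f).
Proof.
  induction m as [|[w x] m IH]; [reflexivity|].
  unfold dbind in *; simpl; rewrite expect_app, IH.
  rewrite (expect_scale_map w (g x) (fun y => y) f); reflexivity.
Qed.

Lemma expect_dret {A} (x : A) f : expect (dret x) f = f x.
Proof. unfold expect, dret; simpl; lra. Qed.

Lemma expect_dbern p f : expect (dbern p) f = p * f true + (1 - p) * f false.
Proof. unfold expect, dbern; simpl; lra. Qed.

Lemma expect_ext {A} (m : dist A) f g :
  (forall x, In x (supp m) -> f x = g x) -> expect m f = expect m g.
Proof.
  unfold expect, supp; induction m as [|[w x] m IH]; intros H; [reflexivity|].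
  simpl in *; rewrite (H x (or_introl eq_refl)), IH; auto.
Qed.

Lemma expect_le {A} (m : dist A) f g : nonneg_weights m ->
  (forall x, In x (supp m) -> f x <= g x) -> expect m f <= expect m g.
Proof.
  unfold expect, supp; induction m as [|[w x] m IH]; intros Hm H; simpl; [lra|].
  apply Forall_cons_iff in Hm as [Hw Hm]; simpl in *.
  assert (w * f x <= w * g x) by (apply Rmult_le_compat_l; auto).
  specialize (IH Hm (fun y Hy => H y (or_intror Hy))); lra.
Qed.

Lemma expect_plus {A} (m : dist A) f g :
  expect m (fun x => f x + g x) = expect m f + expect m g.
Proof. unfold expect; induction m as [|[w x] m IH]; simpl; [lra|]; rewrite IH; lra. Qed.

Lemma expect_scal_l {A} (m : dist A) c f : expect m (fun x => c * f x) = c * expect m f.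
Proof. unfold expect; induction m as [|[w x] m IH]; simpl; [lra|]; rewrite IH; lra. Qed.

Lemma expect_scal_r {A} (m : dist A) f c : expect m (fun x => f x * c) = expect m f * c.
Proof. rewrite Rmult_comm, <- expect_scal_l; apply expect_ext; intros; ring. Qed.

Lemma expect_const {A} (m : dist A) c : expect m (fun _ => c) = c * mass m.
Proof. unfold mass; rewrite <- expect_scal_l; apply expect_ext; intros; ring. Qed.

Lemma expect_eq_const {A} (m : dist A) f c :
  mass m = 1 -> (forall x, In x (supp m) -> f x = c) -> expect m f = c.
Proof. intros Hm H; rewrite (expect_ext _ _ (fun _ => c)), expect_const, Hm; auto; ring. Qed.

Lemma prob_expect {A} (m : dist A) P : prob m P = expect m (fun x => if P x then 1 else 0).
Proof.
  unfold prob, expect; induction m as [|[w x] m IH]; [reflexivity|].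
  simpl; rewrite IH; destruct (P x); lra.
Qed.

Lemma expect_dweighted {A} (l : list (R * A)) f :
  expect (dweighted l) f = expect l f / mass l.
Proof.
  unfold dweighted, mass.
  replace (fold_right Rplus 0 (map fst l)) with (expect l (fun _ => 1)).
  2:{ unfold expect; clear; induction l as [|[w x] l IH]; simpl; [lra|]; rewrite IH; lra. }
  generalize (expect l (fun _ => 1)); intros t.
  unfold expect; induction l as [|[w x] l IH]; simpl in *; unfold Rdiv in *; [lra|].
  rewrite IH; lra.
Qed.

Lemma mass_dweighted {A} (l : list (R * A)) : mass l <> 0 -> mass (dweighted l) = 1.
Proof. intros H; unfold mass at 1; rewrite expect_dweighted; fold (mass l); field; auto. Qed.

Lemma in_supp_dbind {A B} (m : dist A) (g : A -> dist B) y :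
  In y (supp (dbind m g)) -> exists x, In x (supp m) /\ In y (supp (g x)).
Proof.
  unfold supp, dbind; induction m as [|[w x] m IH]; simpl; [tauto|].
  rewrite map_app, in_app_iff, map_map; simpl; intros [H|H].
  - exists x; split; auto.
  - destruct (IH H) as [x' [? ?]]; exists x'; auto.
Qed.

Lemma in_supp_dret {A} (x y : A) : In y (supp (dret x)) -> y = x.
Proof. simpl; intuition. Qed.

Lemma nonneg_weights_dbind {A B} (m : dist A) (g : A -> dist B) :
  nonneg_weights m -> (forall x, In x (supp m) -> nonneg_weights (g x)) ->
  nonneg_weights (dbind m g).
Proof.
  unfold nonneg_weights, supp, dbind; induction m as [|[w x] m IH]; intros Hm H; [constructor|].
  apply Forall_cons_iff in Hm as [Hw Hm]; simpl in *; apply Forall_app; split.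
  - apply Forall_map, (Forall_impl _ (fun qy Hq => Rmult_le_pos _ _ Hw Hq)); auto.
  - apply IH; auto.
Qed.

Lemma nonneg_weights_dret {A} (x : A) : nonneg_weights (dret x).
Proof. repeat constructor; simpl; lra. Qed.

Lemma nonneg_weights_dbern p : 0 <= p <= 1 -> nonneg_weights (dbern p).
Proof. intros; repeat apply Forall_cons; simpl; auto; lra. Qed.

Lemma nonneg_weights_dweighted {A} (l : list (R * A)) :
  nonneg_weights l -> nonneg_weights (dweighted l).
Proof.
  unfold nonneg_weights, dweighted; intros H.
  assert (Ht : 0 <= fold_right Rplus 0 (map fst l)).
  { induction H as [|[w x] l Hw _ IH]; simpl in *; lra. }
  revert Ht; generalize (fold_right Rplus 0 (map fst l)); intros t Ht.
  apply Forall_map; refine (Forall_impl _ _ H); intros [w x] Hw; simpl in *.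
  apply Rmult_le_pos; [auto | apply Rinv_nonneg; auto].
Qed.

Lemma mass_diid {A} k (m : dist A) : mass (diid k m) = mass m ^ k.
Proof.
  induction k; simpl.
  - unfold mass; rewrite expect_dret; lra.
  - unfold mass at 1; rewrite expect_dbind.
    transitivity (expect m (fun _ => mass m ^ k)); [|rewrite expect_const; ring].
    apply expect_ext; intros x _.
    rewrite expect_dbind, <- IHk; unfold mass; apply expect_ext; intros ys _.
    rewrite expect_dret; reflexivity.
Qed.

Lemma nonneg_weights_diid {A} k (m : dist A) : nonneg_weights m -> nonneg_weights (diid k m).
Proof.
  intros H; induction k; simpl; [apply nonneg_weights_dret|].
  apply nonneg_weights_dbind; auto; intros.
  apply nonneg_weights_dbind; auto; intros; apply nonneg_weights_dret.
Qed.

Lemma length_in_supp_diid {A} k (m : dist A) us : In us (supp (diid k m)) -> length us = k.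
Proof.
  revert us; induction k; simpl; intros us H.
  - destruct H as [<-|[]]; reflexivity.
  - apply in_supp_dbind in H as [x [_ H]]; apply in_supp_dbind in H as [xs [Hx H]].
    apply in_supp_dret in H; subst; simpl; f_equal; auto.
Qed.

Lemma nonneg_weights_duniform {A} (l : list A) : nonneg_weights (duniform l).
Proof.
  apply nonneg_weights_dweighted; unfold nonneg_weights.
  apply Forall_map, Forall_forall; simpl; intros; lra.
Qed.

Lemma mass_duniform {A} (l : list A) : l <> [] -> mass (duniform l) = 1.
Proof.
  intros H; apply mass_dweighted; destruct l as [|x l]; [congruence|].
  unfold mass, expect; simpl.
  assert (0 <= fold_right Rplus 0 (map (fun px => fst px * 1) (map (fun y => (1, y)) l)))
    by (clear; induction l; simpl; lra).
  lra.
Qed.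

Fixpoint sum_lt (g : nat -> R) (n : nat) : R :=
  match n with O => 0 | S k => sum_lt g k + g k end.

Lemma sum_lt_ext g h n : (forall k, (k < n)%nat -> g k = h k) -> sum_lt g n = sum_lt h n.
Proof. induction n; intros H; simpl; auto; rewrite IHn, H; auto. Qed.

Lemma sum_lt_le g h n : (forall k, (k < n)%nat -> g k <= h k) -> sum_lt g n <= sum_lt h n.
Proof.
  induction n; intros H; simpl; [lra|].
  specialize (IHn (fun k Hk => H k (Nat.lt_lt_succ_r _ _ Hk))).
  specialize (H n (Nat.lt_succ_diag_r n)); lra.
Qed.

Lemma sum_lt_plus g h n : sum_lt (fun k => g k + h k) n = sum_lt g n + sum_lt h n.
Proof. induction n; simpl; [lra|]; rewrite IHn; lra. Qed.

Lemma sum_lt_scal c g n : sum_lt (fun k => c * g k) n = c * sum_lt g n.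
Proof. induction n; simpl; [lra|]; rewrite IHn; lra. Qed.

Lemma sum_lt_const c n : sum_lt (fun _ => c) n = INR n * c.
Proof. induction n; simpl sum_lt; [simpl; lra|]; rewrite IHn, S_INR; lra. Qed.

Lemma sum_lt_nonneg g n : (forall k, (k < n)%nat -> 0 <= g k) -> 0 <= sum_lt g n.
Proof.
  intros H; replace 0 with (sum_lt (fun _ => 0) n) by (rewrite sum_lt_const; lra).
  apply sum_lt_le; auto.
Qed.

Lemma sum_lt_ge_term g n k :
  (forall j, (j < n)%nat -> 0 <= g j) -> (k < n)%nat -> g k <= sum_lt g n.
Proof.
  induction n; intros H Hk; [lia|]; simpl.
  assert (0 <= g n) by auto; assert (0 <= sum_lt g n) by (apply sum_lt_nonneg; auto).
  destruct (Nat.eq_dec k n) as [->|]; [lra|].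
  assert (g k <= sum_lt g n) by (apply IHn; auto; lia); lra.
Qed.

Lemma expect_sum_lt {A} (m : dist A) (g : A -> nat -> R) n :
  expect m (fun x => sum_lt (g x) n) = sum_lt (fun k => expect m (fun x => g x k)) n.
Proof.
  induction n; simpl; [rewrite expect_const; lra|].
  rewrite expect_plus, IHn; reflexivity.
Qed.

Lemma expect_duniform_seq K (f : nat -> R) :
  expect (duniform (seq 0 K)) f = sum_lt f K / INR K.
Proof.
  unfold duniform; rewrite expect_dweighted; unfold mass.
  assert (Hs : forall g, expect (map (fun x => (1, x)) (seq 0 K)) g = sum_lt g K).
  { intros g; induction K; [reflexivity|].
    rewrite seq_S, map_app, expect_app, IHK; unfold expect; simpl; lra. }
  rewrite !Hs, sum_lt_const, Rmult_1_r; reflexivity.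
Qed.

Fixpoint nseeds (is : list bool) (v : nat) : nat :=
  match v with O => O | S k => (nseeds is k + if nth k is false then 1 else 0)%nat end.

Lemma nseeds_snoc is b v : (v <= length is)%nat -> nseeds (is ++ [b]) v = nseeds is v.
Proof. induction v; intros H; simpl; auto; rewrite IHv, app_nth1 by lia; reflexivity. Qed.

Lemma nseeds_snoc_length is b :
  nseeds (is ++ [b]) (S (length is)) = (nseeds is (length is) + if b then 1 else 0)%nat.
Proof.
  simpl; rewrite nseeds_snoc, app_nth2, Nat.sub_diag by lia; reflexivity.
Qed.

Lemma nseeds_le is v : (nseeds is v <= v)%nat.
Proof. induction v; simpl; auto; destruct (nth v is false); lia. Qed.

Lemma nseeds_mono is v w : (v <= w)%nat -> (nseeds is v <= nseeds is w)%nat.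
Proof. induction 1; simpl; lia. Qed.

Lemma nseeds_exists is v c : (c < nseeds is v)%nat ->
  exists u, (u < v)%nat /\ nth u is false = true /\ nseeds is u = c.
Proof.
  induction v; simpl; intros H; [lia|].
  destruct (Nat.lt_ge_cases c (nseeds is v)) as [Hc|Hc].
  - destruct (IHv Hc) as [u [? [? ?]]]; exists u; repeat split; auto.
  - exists v; destruct (nth v is false); repeat split; auto; lia.
Qed.

Record wf_state (s : state) : Prop := {
  wf_length : length (isseed s) = length (col s);
  wf_ncol : ncol s = nseeds (isseed s) (length (col s));
  wf_ncol_pos : (1 <= ncol s)%nat;
  wf_seed_col : forall u, (u < length (col s))%nat -> nth u (isseed s) false = true ->
    nth u (col s) O = nseeds (isseed s) u;
  wf_deg : forall u, (u < length (col s))%nat -> (1 <= deg s u)%nat }.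

Lemma in_nodes s u : In u (nodes s) <-> (u < length (col s))%nat.
Proof. unfold nodes; rewrite in_seq; lia. Qed.

Lemma wf_seed_exists s c : wf_state s -> (c < ncol s)%nat ->
  exists u, (u < length (col s))%nat /\ nth u (isseed s) false = true /\ nth u (col s) O = c.
Proof.
  intros Hs Hc; rewrite (wf_ncol _ Hs) in Hc.
  destruct (nseeds_exists _ _ _ Hc) as [u [? [? ?]]].
  exists u; repeat split; auto; rewrite (wf_seed_col _ Hs); auto.
Qed.

Lemma wf_seeds_nonempty s : wf_state s -> seeds s <> [].
Proof.
  intros Hs Hnil; destruct (wf_seed_exists s 0 Hs (wf_ncol_pos _ Hs)) as [u [Hu [Hseed _]]].
  assert (Hin : In u (seeds s)) by (apply filter_In; rewrite in_nodes; auto).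
  rewrite Hnil in Hin; destruct Hin.
Qed.

Lemma nonneg_weights_degpick s l : nonneg_weights (degpick s l).
Proof.
  apply nonneg_weights_dweighted, Forall_map, Forall_forall; intros; apply pos_INR.
Qed.

Lemma mass_degpick s l u : In u l -> (1 <= deg s u)%nat -> mass (degpick s l) = 1.
Proof.
  intros Hu Hdeg; apply mass_dweighted, Rgt_not_eq.
  unfold mass, expect; induction l as [|x l IH]; simpl in *; [tauto|].
  assert (Hnn : 0 <= fold_right Rplus 0
                  (map (fun px => fst px * 1) (map (fun u => (INR (deg s u), u)) l))).
  { clear; induction l; simpl; [lra|]; pose proof (pos_INR (deg s a)); lra. }
  destruct Hu as [<-|Hu].
  - apply le_INR in Hdeg; simpl in Hdeg; lra.
  - specialize (IH Hu); pose proof (pos_INR (deg s x)); lra.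
Qed.

Lemma p_new_bounds a i : 0 < a -> (3 <= i)%nat -> 0 <= p_new a i <= 1.
Proof.
  intros Ha Hi; unfold p_new, Rpower; split; [left; apply exp_pos|].
  assert (1 <= ln (INR i)) by (apply ln_ge1, INR_ge3; auto).
  assert (0 <= ln (ln (INR i))) by (rewrite <- ln_1; apply ln_le_compat; lra).
  rewrite <- exp_0; apply exp_le_compat; nra.
Qed.

Lemma p_new_antimono a i j : 0 < a -> (3 <= i <= j)%nat -> p_new a j <= p_new a i.
Proof.
  intros Ha Hij; unfold p_new, Rpower; apply exp_le_compat.
  assert (Hi : 3 <= INR i) by (apply INR_ge3; lia).
  assert (Hj : INR i <= INR j) by (apply le_INR; lia).
  assert (1 <= ln (INR i)) by (apply ln_ge1; lra).
  assert (ln (INR i) <= ln (INR j)) by (apply ln_le_compat; lra).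
  assert (ln (ln (INR i)) <= ln (ln (INR j))) by (apply ln_le_compat; lra).
  nra.
Qed.

Lemma expect_step a d i s (F : list nat -> list bool -> R) :
  wf_state s ->
  expect (step a d i s) (fun s' => F (col s') (isseed s')) =
  p_new a i * F (col s ++ [ncol s]) (isseed s ++ [true]) +
  (1 - p_new a i) *
    (sum_lt (fun c => F (col s ++ [c]) (isseed s ++ [false])) (ncol s) / INR (ncol s)).
Proof.
  intros Hs; unfold step; rewrite expect_dbind, expect_dbern; f_equal; f_equal.
  - assert (Hlen : (0 < length (col s))%nat).
    { pose proof (wf_ncol_pos _ Hs); pose proof (nseeds_le (isseed s) (length (col s))).
      rewrite (wf_ncol _ Hs) in *; lia. }
    rewrite expect_dbind; apply expect_eq_const.
    + apply (mass_degpick s (nodes s) 0); [apply in_nodes; auto | apply (wf_deg _ Hs); auto].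
    + intros u _; rewrite expect_dbind; apply expect_eq_const.
      * rewrite mass_diid, mass_duniform by apply wf_seeds_nonempty, Hs; apply pow1.
      * intros; rewrite expect_dret; reflexivity.
  - rewrite expect_dbind, expect_duniform_seq; f_equal; apply sum_lt_ext; intros c Hc.
    destruct (wf_seed_exists s c Hs Hc) as [u [Hu [_ Hcol]]].
    rewrite expect_dbind; apply expect_eq_const.
    + rewrite mass_diid, (mass_degpick s (of_color s c) u); [apply pow1 | |].
      * apply filter_In; rewrite in_nodes, Hcol, Nat.eqb_refl; auto.
      * apply (wf_deg _ Hs); auto.
    + intros; rewrite expect_dret; reflexivity.
Qed.

Lemma deg_add_edges (c c' : list nat) (is is' : list bool) (e e' : list (nat * nat))
  (k k' u : nat) :
  (deg (mkState c is e k) u <= deg (mkState c' is' (e ++ e') k') u)%nat.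
Proof. unfold deg; simpl; rewrite filter_app, length_app; lia. Qed.

Lemma deg_new_node (c : list nat) (is : list bool) (e : list (nat * nat)) (k v : nat) us :
  us <> [] -> (1 <= deg (mkState c is (e ++ map (fun w => (v, w)) us) k) v)%nat.
Proof.
  intros H; unfold deg; simpl; rewrite filter_app, length_app.
  destruct us as [|w us]; [congruence|]; simpl; rewrite Nat.eqb_refl; simpl; lia.
Qed.

Lemma wf_snoc s (c : nat) (b : bool) (e' : list (nat * nat)) (k' : nat) :
  wf_state s -> k' = (ncol s + if b then 1 else 0)%nat ->
  (b = true -> c = ncol s) ->
  (1 <= deg (mkState (col s ++ [c]) (isseed s ++ [b]) (edges s ++ e') k') (length (col s)))%nat ->
  wf_state (mkState (col s ++ [c]) (isseed s ++ [b]) (edges s ++ e') k').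
Proof.
  intros Hs -> Hc Hdeg; pose proof (wf_length _ Hs) as Hlen.
  constructor; simpl; rewrite ?length_app, ?Hlen; simpl.
  - reflexivity.
  - rewrite Nat.add_1_r, (wf_ncol _ Hs), <- Hlen, nseeds_snoc_length; reflexivity.
  - pose proof (wf_ncol_pos _ Hs); lia.
  - intros u Hu Hseed; rewrite nseeds_snoc by lia.
    destruct (Nat.eq_dec u (length (col s))) as [->|Hne].
    + rewrite <- Hlen, app_nth2, Nat.sub_diag in Hseed by lia; simpl in Hseed.
      rewrite app_nth2, Nat.sub_diag by lia; simpl; rewrite (Hc Hseed), (wf_ncol _ Hs); reflexivity.
    + rewrite app_nth1 in Hseed by lia; rewrite app_nth1 by lia.
      apply (wf_seed_col _ Hs); auto; lia.
  - intros u Hu; destruct (Nat.eq_dec u (length (col s))) as [->|Hne]; auto.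
    apply (Nat.le_trans _ (deg s u)); [apply (wf_deg _ Hs); lia | destruct s; apply deg_add_edges].
Qed.

Lemma wf_step a d i s s' : (1 <= d)%nat -> wf_state s -> In s' (supp (step a d i s)) ->
  wf_state s' /\ length (col s') = S (length (col s)).
Proof.
  intros Hd Hs Hs'; unfold step in Hs'.
  apply in_supp_dbind in Hs' as [[|] [_ Hb]].
  - apply in_supp_dbind in Hb as [u [_ Hb]]; apply in_supp_dbind in Hb as [us [_ Hb]].
    apply in_supp_dret in Hb; subst s'; simpl; rewrite length_app; split; [|simpl; lia].
    apply wf_snoc; [auto | lia | auto |].
    apply (deg_new_node _ _ _ _ _ (u :: us)); congruence.
  - apply in_supp_dbind in Hb as [c [_ Hb]]; apply in_supp_dbind in Hb as [us [Hus Hb]].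
    apply in_supp_dret in Hb; subst s'; simpl; rewrite length_app; split; [|simpl; lia].
    apply length_in_supp_diid in Hus.
    apply wf_snoc; [auto | lia | discriminate |].
    apply deg_new_node; intros ->; simpl in Hus; lia.
Qed.

Lemma nonneg_weights_step a d i s : 0 < a -> (3 <= i)%nat -> nonneg_weights (step a d i s).
Proof.
  intros Ha Hi; unfold step.
  apply nonneg_weights_dbind; [apply nonneg_weights_dbern, p_new_bounds; auto|].
  intros [|] _; apply nonneg_weights_dbind;
    auto using nonneg_weights_degpick, nonneg_weights_duniform; intros;
    apply nonneg_weights_dbind; auto using nonneg_weights_diid, nonneg_weights_duniform,
      nonneg_weights_degpick; intros; apply nonneg_weights_dret.
Qed.

Lemma mass_step a d i s : wf_state s -> mass (step a d i s) = 1.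
Proof.
  intros Hs; unfold mass.
  rewrite (expect_step a d i s (fun _ _ => 1)), sum_lt_const by auto.
  pose proof (le_INR _ _ (wf_ncol_pos _ Hs)); simpl in *; field; lra.
Qed.

Lemma wf_G2 : wf_state G2.
Proof.
  constructor; simpl; auto.
  - intros [|[|u]] Hu; simpl; auto; lia.
  - intros [|[|u]] Hu; unfold deg; simpl; lia.
Qed.

Lemma gen_wf a d k : 0 < a -> (1 <= d)%nat ->
  nonneg_weights (gen a d k) /\ mass (gen a d k) = 1 /\
  forall s, In s (supp (gen a d k)) -> wf_state s /\ length (col s) = (k + 2)%nat.
Proof.
  intros Ha Hd; induction k as [|k [Hnn [Hmass Hsupp]]]; simpl.
  - split; [apply nonneg_weights_dret|]; split; [unfold mass; rewrite expect_dret; reflexivity|].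
    intros s Hs; apply in_supp_dret in Hs as ->; split; [apply wf_G2 | reflexivity].
  - split; [|split].
    + apply nonneg_weights_dbind; auto; intros; apply nonneg_weights_step; auto; lia.
    + unfold mass; rewrite expect_dbind; apply expect_eq_const; auto; intros s Hs.
      apply mass_step, Hsupp; auto.
    + intros s' Hs'; apply in_supp_dbind in Hs' as [s [Hs Hs']].
      destruct (Hsupp s Hs) as [Hwf Hlen]; destruct (wf_step a d _ s s' Hd Hwf Hs').
      split; auto; lia.
Qed.

(* A state with [v] nodes is G_v, and the step leaving it is performed at time [v + 1]. *)
Lemma gen_supermartingale a d k (Y : list nat -> list bool -> R) : 0 < a -> (1 <= d)%nat ->
  (forall s, wf_state s -> (2 <= length (col s))%nat ->
     expect (step a d (S (length (col s))) s) (fun s' => Y (col s') (isseed s'))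
       <= Y (col s) (isseed s)) ->
  expect (gen a d k) (fun s => Y (col s) (isseed s)) <= Y (col G2) (isseed G2).
Proof.
  intros Ha Hd Hsuper; induction k; simpl.
  - rewrite expect_dret; apply Rle_refl.
  - rewrite expect_dbind; eapply Rle_trans; [|apply IHk].
    destruct (gen_wf a d k Ha Hd) as [Hnn [_ Hsupp]].
    apply expect_le; auto; intros s Hs; destruct (Hsupp s Hs) as [Hwf Hlen].
    replace (k + 3)%nat with (S (length (col s))) by lia; apply Hsuper; auto; lia.
Qed.

Lemma compensated_exp_step_le Y l q r :
  0 <= Y -> (exp l - 1) * q <= (exp l - 1) * r ->
  Y * exp (- ((exp l - 1) * r)) * (q * exp l + (1 - q)) <= Y.
Proof.
  intros HY Hqr.
  assert (H1 : q * exp l + (1 - q) <= exp ((exp l - 1) * r)).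
  { eapply Rle_trans; [|apply exp_le_compat, Hqr].
    pose proof (exp_ineq1_le ((exp l - 1) * q)); lra. }
  assert (H2 : exp (- ((exp l - 1) * r)) * exp ((exp l - 1) * r) = 1)
    by (rewrite <- exp_plus, Rplus_opp_l; apply exp_0).
  pose proof (exp_pos (- ((exp l - 1) * r))).
  rewrite Rmult_assoc; rewrite <- (Rmult_1_r Y) at 2; apply Rmult_le_compat_l; nra.
Qed.

Definition seed_prob (a : R) (v : nat) : R := if (2 <=? v)%nat then p_new a (S v) else 0.

(* The number of colors, compensated by the seed probabilities, stopped after [m] nodes so
   that it also controls the number of colors at time [T2]; the [- 2] discounts the two
   seeds of G_2. *)
Definition kproc (a l : R) (m : nat) (cl : list nat) (is : list bool) : R :=
  let v := Nat.min (length cl) m in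
  exp (l * (INR (nseeds is v) - 2) - (exp l - 1) * sum_lt (seed_prob a) v).

Lemma kproc_snoc a l m cl is c b :
  length is = length cl -> (2 <= length cl)%nat ->
  kproc a l m (cl ++ [c]) (is ++ [b]) = kproc a l m cl is *
    if (length cl <? m)%nat
    then exp (l * (if b then 1 else 0) - (exp l - 1) * p_new a (S (length cl))) else 1.
Proof.
  intros Hlen H2; unfold kproc; rewrite length_app, Nat.add_1_r; simpl length.
  destruct (Nat.ltb_spec (length cl) m) as [Hlt|Hge].
  - rewrite !Nat.min_l by lia; rewrite <- Hlen in *; rewrite nseeds_snoc_length.
    simpl sum_lt; unfold seed_prob at 2; rewrite (proj2 (Nat.leb_le 2 _)) by lia.
    rewrite <- exp_plus, plus_INR; f_equal; destruct b; simpl; ring.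
  - rewrite !Nat.min_r, nseeds_snoc by lia; ring.
Qed.

Lemma kproc_supermartingale a d l m s :
  wf_state s -> (2 <= length (col s))%nat ->
  expect (step a d (S (length (col s))) s) (fun s' => kproc a l m (col s') (isseed s'))
    <= kproc a l m (col s) (isseed s).
Proof.
  intros Hs Hlen; pose proof (wf_length _ Hs) as Hl.
  pose proof (le_INR _ _ (wf_ncol_pos _ Hs)) as HK; simpl in HK.
  rewrite expect_step by auto.
  rewrite (sum_lt_ext _ (fun _ => kproc a l m (col s ++ [0%nat]) (isseed s ++ [false])))
    by (intros; rewrite !kproc_snoc; auto).
  rewrite sum_lt_const, !kproc_snoc by auto.
  set (Y := kproc a l m (col s) (isseed s)); set (p := p_new a (S (length (col s)))).
  assert (HY : 0 <= Y) by (left; apply exp_pos).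
  destruct (length (col s) <? m)%nat.
  - replace (exp (l * 1 - (exp l - 1) * p)) with (exp (- ((exp l - 1) * p)) * exp l)
      by (rewrite <- exp_plus; f_equal; ring).
    replace (exp (l * 0 - (exp l - 1) * p)) with (exp (- ((exp l - 1) * p))) by (f_equal; ring).
    replace (p * (Y * (exp (- ((exp l - 1) * p)) * exp l))
             + (1 - p) * (INR (ncol s) * (Y * exp (- ((exp l - 1) * p))) / INR (ncol s)))
      with (Y * exp (- ((exp l - 1) * p)) * (p * exp l + (1 - p))) by (field; lra).
    apply compensated_exp_step_le; [auto | lra].
  - right; field; lra.
Qed.

Definition nonseed_count (c : nat) (cl : list nat) (is : list bool) : R :=
  sum_lt (fun u => if negb (nth u is false) && (nth u cl O =? c)%nat then 1 else 0) (length cl).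

(* Given G_v with [K] colors, node v is a non-seed node of an existing color [c]
   with probability [(1 - p_new a (S v)) / K]; [color_rate] replaces the numerator by a
   weight [w v], which must bound it from the appropriate side. *)
Definition color_rate (w : nat -> R) (is : list bool) (c v : nat) : R :=
  if (2 <=? v)%nat && (c <? nseeds is v)%nat then w v / INR (nseeds is v) else 0.

Definition cproc (w : nat -> R) (l : R) (c : nat) (cl : list nat) (is : list bool) : R :=
  exp (l * nonseed_count c cl is - (exp l - 1) * sum_lt (color_rate w is c) (length cl)).

Lemma nonseed_count_snoc c cl is c' b : length is = length cl ->
  nonseed_count c (cl ++ [c']) (is ++ [b]) =
  nonseed_count c cl is + if negb b && (c' =? c)%nat then 1 else 0.
Proof.
  intros Hlen; unfold nonseed_count; rewrite length_app, Nat.add_1_r; simpl sum_lt.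
  rewrite nth_middle; replace (nth (length cl) (is ++ [b]) false) with b
    by (rewrite <- Hlen, nth_middle; reflexivity).
  f_equal; apply sum_lt_ext; intros u Hu; rewrite !app_nth1 by lia; reflexivity.
Qed.

Lemma color_rate_snoc w is c b v : (v <= length is)%nat ->
  color_rate w (is ++ [b]) c v = color_rate w is c v.
Proof. intros Hv; unfold color_rate; rewrite nseeds_snoc by lia; reflexivity. Qed.

Lemma cproc_snoc w l c cl is c' b : length is = length cl ->
  cproc w l c (cl ++ [c']) (is ++ [b]) = cproc w l c cl is *
    exp (l * (if negb b && (c' =? c)%nat then 1 else 0)
         - (exp l - 1) * color_rate w is c (length cl)).
Proof.
  intros Hlen; unfold cproc; rewrite nonseed_count_snoc by auto.
  rewrite length_app, Nat.add_1_r; simpl sum_lt.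
  rewrite color_rate_snoc by lia.
  rewrite (sum_lt_ext _ (color_rate w is c)) by (intros; apply color_rate_snoc; lia).
  rewrite <- exp_plus; f_equal; ring.
Qed.

Lemma sum_lt_indicator c K x :
  sum_lt (fun c' => if (c' =? c)%nat then x else 1) K = INR K + if (c <? K)%nat then x - 1 else 0.
Proof.
  induction K; simpl sum_lt; [destruct c; simpl; lra|].
  rewrite IHK, S_INR.
  destruct (Nat.eqb_spec K c) as [->|Hne].
  - rewrite (proj2 (Nat.ltb_ge c c)), (proj2 (Nat.ltb_lt c (S c))) by lia; lra.
  - destruct (Nat.ltb_spec c K), (Nat.ltb_spec c (S K)); try lia; lra.
Qed.

Lemma cproc_supermartingale a d w l c s :
  wf_state s -> (2 <= length (col s))%nat ->
  (exp l - 1) * (1 - p_new a (S (length (col s)))) <= (exp l - 1) * w (length (col s)) ->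
  expect (step a d (S (length (col s))) s) (fun s' => cproc w l c (col s') (isseed s'))
    <= cproc w l c (col s) (isseed s).
Proof.
  intros Hs Hlen Hw; pose proof (wf_length _ Hs) as Hl.
  pose proof (le_INR _ _ (wf_ncol_pos _ Hs)) as HK; simpl in HK.
  rewrite expect_step, cproc_snoc by auto.
  set (Y := cproc w l c (col s) (isseed s)); set (r := color_rate w (isseed s) c (length (col s))).
  set (Z := exp (- ((exp l - 1) * r))); set (p := p_new a (S (length (col s)))).
  rewrite (sum_lt_ext _ (fun c' => Y * Z * if (c' =? c)%nat then exp l else 1)).
  2:{ intros c' _; rewrite cproc_snoc by auto; fold Y r; unfold Z; simpl.
      destruct (c' =? c)%nat; [rewrite Rmult_assoc, <- exp_plus | rewrite Rmult_1_r];
        f_equal; f_equal; ring. }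
  replace (exp (l * (if negb true && _ then 1 else 0) - (exp l - 1) * r)) with Z
    by (unfold Z; simpl; f_equal; ring).
  rewrite sum_lt_scal, sum_lt_indicator.
  assert (HY : 0 <= Y) by (left; apply exp_pos).
  assert (Hr : r = if (c <? ncol s)%nat then w (length (col s)) / INR (ncol s) else 0).
  { unfold r, color_rate; rewrite <- (wf_ncol _ Hs).
    rewrite (proj2 (Nat.leb_le 2 _)) by auto; reflexivity. }
  destruct (c <? ncol s)%nat.
  - replace (p * (Y * Z) + (1 - p) * (Y * Z * (INR (ncol s) + (exp l - 1)) / INR (ncol s)))
      with (Y * Z * ((1 - p) / INR (ncol s) * exp l + (1 - (1 - p) / INR (ncol s))))
      by (field; lra).
    unfold Z; apply compensated_exp_step_le; [exact HY|]; rewrite Hr; unfold Rdiv.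
    rewrite <- !Rmult_assoc; apply Rmult_le_compat_r; [apply Rinv_nonneg; lra | exact Hw].
  - unfold Z; rewrite Hr, Rmult_0_r, Ropp_0, exp_0; right; field; lra.
Qed.

Lemma sum_lt_ge_tail g n m b : (forall v, (v < n)%nat -> 0 <= g v) ->
  (forall v, (m <= v < n)%nat -> b <= g v) -> INR (n - m) * b <= sum_lt g n.
Proof.
  induction n; intros H0 Hb; simpl sum_lt; [simpl; lra|].
  assert (0 <= g n) by auto.
  destruct (le_lt_dec (S n) m).
  - replace (S n - m)%nat with O by lia; simpl.
    assert (0 <= sum_lt g n) by (apply sum_lt_nonneg; auto); lra.
  - replace (S n - m)%nat with (S (n - m)) by lia; rewrite S_INR.
    assert (INR (n - m) * b <= sum_lt g n) by (apply IHn; intros; [apply H0 | apply Hb]; lia).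
    assert (b <= g n) by (apply Hb; lia); lra.
Qed.

Lemma sum_lt_le_tail g n m b : (forall v, (v < m)%nat -> (v < n)%nat -> g v <= 0) ->
  (forall v, (m <= v < n)%nat -> g v <= b) -> sum_lt g n <= INR (n - m) * b.
Proof.
  induction n; intros H0 Hb; simpl sum_lt; [simpl; lra|].
  assert (IH : sum_lt g n <= INR (n - m) * b) by (apply IHn; intros; [apply H0 | apply Hb]; lia).
  destruct (le_lt_dec (S n) m).
  - replace (n - m)%nat with O in IH by lia; replace (S n - m)%nat with O by lia.
    assert (g n <= 0) by (apply H0; lia); simpl in *; lra.
  - replace (S n - m)%nat with (S (n - m)) by lia; rewrite S_INR.
    assert (g n <= b) by (apply Hb; lia); lra.
Qed.

Lemma hsize_eq_sum s c :
  INR (hsize s c) = sum_lt (fun u => if (nth u (col s) O =? c)%nat then 1 else 0) (length (col s)).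
Proof.
  unfold hsize, of_color, nodes; induction (length (col s)) as [|n IH]; [reflexivity|].
  rewrite seq_S, filter_app, length_app, plus_INR, IH; simpl.
  destruct (nth n (col s) O =? c)%nat; simpl; lra.
Qed.

Lemma nonseed_count_le_hsize s c : nonseed_count c (col s) (isseed s) <= INR (hsize s c).
Proof.
  rewrite hsize_eq_sum; apply sum_lt_le; intros u _.
  destruct (negb _), (_ =? c)%nat; simpl; lra.
Qed.

Lemma seeds_of_color_le1 s c v : wf_state s -> (v <= length (col s))%nat ->
  sum_lt (fun u => if nth u (isseed s) false && (nth u (col s) O =? c)%nat then 1 else 0) v
  <= if (c <? nseeds (isseed s) v)%nat then 1 else 0.
Proof.
  intros Hs; induction v as [|v IH]; intros Hv; simpl sum_lt; [destruct c; simpl; lra|].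
  specialize (IH ltac:(lia)); simpl nseeds.
  destruct (nth v (isseed s) false) eqn:Hseed; simpl andb; [|rewrite Nat.add_0_r; lra].
  destruct (Nat.eqb_spec (nth v (col s) O) c) as [Hc|Hc].
  - rewrite (wf_seed_col _ Hs) in Hc by (auto; lia); subst c.
    rewrite (proj2 (Nat.ltb_ge _ _)) in IH by lia; rewrite (proj2 (Nat.ltb_lt _ _)) by lia; lra.
  - destruct (Nat.ltb_spec c (nseeds (isseed s) v)), (Nat.ltb_spec c (nseeds (isseed s) v + 1));
      try lia; lra.
Qed.

Lemma hsize_le_nonseed_count s c :
  wf_state s -> INR (hsize s c) <= nonseed_count c (col s) (isseed s) + 1.
Proof.
  intros Hs; rewrite hsize_eq_sum; unfold nonseed_count.
  pose proof (seeds_of_color_le1 s c (length (col s)) Hs (le_n _)) as Hle.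
  rewrite (sum_lt_ext _ (fun u =>
      (if negb (nth u (isseed s) false) && (nth u (col s) O =? c)%nat then 1 else 0) +
      (if nth u (isseed s) false && (nth u (col s) O =? c)%nat then 1 else 0)))
    by (intros u _; destruct (nth u (isseed s) false), (_ =? c)%nat; simpl; lra).
  rewrite sum_lt_plus; destruct (c <? _)%nat; lra.
Qed.

Lemma forallb_false_exists {A} (f : A -> bool) l :
  forallb f l = false -> exists x, In x l /\ f x = false.
Proof.
  induction l as [|x l IH]; simpl; [discriminate|].
  destruct (f x) eqn:Hf; simpl; [intros H; destruct (IH H) as [y [? ?]]; exists y | exists x]; auto.
Qed.

Lemma not_good_witness a n s : wf_state s -> good a n s = false ->
  exists c u, (c < ncol s)%nat /\ (u < length (col s))%nat /\
    nth u (isseed s) false = true /\ nseeds (isseed s) u = c /\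
    (INR (S u) <= T2 a n /\ INR (hsize s c) < ln (INR n) \/
     T2 a n < INR (S u) /\ 30 * ln (INR n) < INR (hsize s c)).
Proof.
  intros Hs Hbad; apply forallb_false_exists in Hbad as [c [Hc Hbad]]; apply in_seq in Hc.
  unfold seed_time in Hbad.
  destruct (filter _ (nodes s)) as [|u l] eqn:Hf.
  - destruct (wf_seed_exists s c Hs ltac:(lia)) as [u [Hu [Hseed Hcol]]].
    assert (Hin : In u (filter (fun u => nth u (isseed s) false && (nth u (col s) O =? c)%nat)
                               (nodes s)))
      by (apply filter_In; rewrite in_nodes, Hseed, Hcol, Nat.eqb_refl; auto).
    rewrite Hf in Hin; destruct Hin.
  - assert (Hin : In u (filter (fun u => nth u (isseed s) false && (nth u (col s) O =? c)%nat)
                               (nodes s))) by (rewrite Hf; left; auto).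
    apply filter_In in Hin as [Hu Hp]; apply in_nodes in Hu.
    apply andb_prop in Hp as [Hseed Hcol]; apply Nat.eqb_eq in Hcol.
    exists c, u; repeat split; [lia | auto | auto | |].
    { rewrite <- Hcol; symmetry; apply (wf_seed_col _ Hs); auto. }
    unfold Rleb in Hbad.
    destruct (Rle_dec (INR (S u)) (T2 a n));
      [destruct (Rle_dec (ln (INR n)) (INR (hsize s c))) |
       destruct (Rle_dec (INR (hsize s c)) (30 * ln (INR n)))]; try discriminate; lra.
Qed.

Lemma early_color_rate_ge a is c u n m k1 :
  0 < a -> nth u is false = true -> nseeds is u = c -> (S u <= m)%nat -> (2 <= m <= n)%nat ->
  INR (nseeds is n) <= k1 ->
  INR (n - m) * ((1 - p_new a (S m)) / k1)
    <= sum_lt (color_rate (fun v => 1 - p_new a (S v)) is c) n.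
Proof.
  intros Ha Hseed Hc Hum Hm Hk1.
  assert (HSc : forall v, (S u <= v)%nat -> (S c <= nseeds is v)%nat).
  { intros v Hv; rewrite <- Hc.
    apply (Nat.le_trans _ (nseeds is (S u))); [|apply nseeds_mono; auto].
    simpl; rewrite Hseed; lia. }
  apply sum_lt_ge_tail; intros v Hv; unfold color_rate.
  - destruct (Nat.leb_spec 2 v), (Nat.ltb_spec c (nseeds is v)); simpl; try lra.
    pose proof (p_new_bounds a (S v) Ha ltac:(lia)).
    apply Rmult_le_pos; [lra | apply Rinv_nonneg, pos_INR].
  - assert (Hv2 : (2 <= v)%nat) by lia; pose proof (HSc v ltac:(lia)) as Hcv.
    rewrite (proj2 (Nat.leb_le _ _) Hv2), (proj2 (Nat.ltb_lt _ _)) by lia; simpl.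
    assert (Hpos : 0 < INR (nseeds is v)) by (apply lt_0_INR; lia).
    assert (HKv : INR (nseeds is v) <= k1)
      by (apply (Rle_trans _ (INR (nseeds is n))); [apply le_INR, nseeds_mono; lia | auto]).
    assert (Hpv : p_new a (S v) <= p_new a (S m)) by (apply p_new_antimono; auto; lia).
    pose proof (p_new_bounds a (S m) Ha ltac:(lia)).
    unfold Rdiv; apply Rle_trans with ((1 - p_new a (S m)) * / INR (nseeds is v)).
    + apply Rmult_le_compat_l; [lra | apply Rinv_le_contravar; auto].
    + apply Rmult_le_compat_r; [apply Rinv_nonneg |]; lra.
Qed.

Lemma late_color_rate_le is c u n k0 :
  nseeds is u = c -> 0 < k0 -> (forall v, (S u <= v < n)%nat -> k0 <= INR (nseeds is v)) ->
  sum_lt (color_rate (fun _ => 1) is c) n <= INR (n - S u) * / k0.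
Proof.
  intros Hc Hk0 Hk; apply sum_lt_le_tail; intros v Hv; unfold color_rate.
  - assert (Hcv : (nseeds is v <= c)%nat) by (rewrite <- Hc; apply nseeds_mono; lia).
    rewrite (proj2 (Nat.ltb_ge c _) Hcv), andb_false_r; lra.
  - destruct (_ && _); [|left; apply Rinv_0_lt_compat; auto].
    unfold Rdiv; rewrite Rmult_1_l; apply Rinv_le_contravar; auto.
Qed.

Definition kthr (a l k : R) (v : nat) : R := l * (k - 2) - (exp l - 1) * sum_lt (seed_prob a) v.

Definition late_thr (a : R) (n : nat) (k0 : R) : R :=
  (30 * ln (INR n) - 1) - (exp 1 - 1) * ((INR n - T2 a n) / k0).

Definition early_thr (a : R) (n m : nat) (k1 : R) : R :=
  - 2 * ln (INR n) - (exp (- 2) - 1) * (INR (n - m) * ((1 - p_new a (S m)) / k1)).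

(* Outside [good] one of four exponential processes exceeds its threshold: too many
   colors at the end, too few at time [m], or a color that is too small or too large. *)
Definition bad_bound (a : R) (n m : nat) (k0 k1 lu ll : R) (cl : list nat) (is : list bool) : R :=
  kproc a lu n cl is * exp (- kthr a lu k1 n) +
  kproc a (- ll) m cl is * exp (- kthr a (- ll) k0 m) +
  sum_lt (fun c => cproc (fun _ => 1) 1 c cl is * exp (- late_thr a n k0) +
                   cproc (fun v => 1 - p_new a (S v)) (- 2) c cl is * exp (- early_thr a n m k1)) n.

Lemma one_le_exp_shift x y : y <= x -> 1 <= exp x * exp (- y).
Proof. intros H; rewrite <- exp_plus, <- exp_0; apply exp_le_compat; lra. Qed.

Lemma exp_mul_nonneg x y : 0 <= exp x * exp y.
Proof. left; apply Rmult_lt_0_compat; apply exp_pos. Qed.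

Lemma small_early_color_exceeds a n m k1 s c u :
  0 < a -> wf_state s -> length (col s) = n -> (2 <= m <= n)%nat -> (S u <= m)%nat ->
  nth u (isseed s) false = true -> nseeds (isseed s) u = c ->
  INR (nseeds (isseed s) n) <= k1 -> INR (hsize s c) < ln (INR n) ->
  1 <= cproc (fun v => 1 - p_new a (S v)) (- 2) c (col s) (isseed s) * exp (- early_thr a n m k1).
Proof.
  intros Ha Hs Hlen Hm Hum Hseed Hcu Hk1 Hsmall; unfold cproc, early_thr; rewrite Hlen.
  apply one_le_exp_shift.
  pose proof (nonseed_count_le_hsize s c).
  pose proof (early_color_rate_ge a (isseed s) c u n m k1 Ha Hseed Hcu Hum Hm Hk1).
  assert (exp (- 2) <= 1) by (rewrite <- exp_0; apply exp_le_compat; lra).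
  assert (0 <= (1 - exp (- 2)) *
                 (sum_lt (color_rate (fun v => 1 - p_new a (S v)) (isseed s) c) n
                  - INR (n - m) * ((1 - p_new a (S m)) / k1)))
    by (apply Rmult_le_pos; lra).
  lra.
Qed.

Lemma large_late_color_exceeds a n m k0 s c u :
  wf_state s -> length (col s) = n -> (u < n)%nat -> (m <= u)%nat -> nseeds (isseed s) u = c ->
  0 < k0 -> k0 <= INR (nseeds (isseed s) m) -> T2 a n < INR (S u) ->
  30 * ln (INR n) < INR (hsize s c) ->
  1 <= cproc (fun _ => 1) 1 c (col s) (isseed s) * exp (- late_thr a n k0).
Proof.
  intros Hs Hlen Hu Hmu Hcu Hk0 Hk0m Hlate Hbig; unfold cproc, late_thr; rewrite Hlen.
  apply one_le_exp_shift.
  pose proof (hsize_le_nonseed_count s c Hs).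
  assert (Hk : forall v, (S u <= v < n)%nat -> k0 <= INR (nseeds (isseed s) v))
    by (intros v Hv; eapply Rle_trans; [apply Hk0m | apply le_INR, nseeds_mono; lia]).
  pose proof (late_color_rate_le (isseed s) c u n k0 Hcu Hk0 Hk) as Hrate.
  assert (INR (n - S u) <= INR n - T2 a n) by (rewrite minus_INR by lia; lra).
  assert (sum_lt (color_rate (fun _ => 1) (isseed s) c) n <= (INR n - T2 a n) / k0)
    by (eapply Rle_trans; [apply Hrate | apply Rmult_le_compat_r; [apply Rinv_nonneg|]; lra]).
  pose proof (exp_ineq1_le 1); nra.
Qed.

Lemma not_good_le_bad_bound a n m k0 k1 lu ll s :
  0 < a -> wf_state s -> length (col s) = n -> (2 <= m <= n)%nat ->
  INR m <= T2 a n < INR m + 1 -> 0 < k0 -> 0 < lu -> 0 < ll ->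
  (if good a n s then 0 else 1) <= bad_bound a n m k0 k1 lu ll (col s) (isseed s).
Proof.
  intros Ha Hs Hlen Hm HT Hk0 Hlu Hll; unfold bad_bound.
  set (g := fun c => cproc (fun _ => 1) 1 c (col s) (isseed s) * exp (- late_thr a n k0) +
                     cproc (fun v => 1 - p_new a (S v)) (- 2) c (col s) (isseed s)
                       * exp (- early_thr a n m k1)).
  assert (Hg : forall c, 0 <= g c) by (intros; apply Rplus_le_le_0_compat; apply exp_mul_nonneg).
  assert (Hsum : 0 <= sum_lt g n) by (apply sum_lt_nonneg; auto).
  assert (HU : 0 <= kproc a lu n (col s) (isseed s) * exp (- kthr a lu k1 n))
    by apply exp_mul_nonneg.
  assert (HL : 0 <= kproc a (- ll) m (col s) (isseed s) * exp (- kthr a (- ll) k0 m))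
    by apply exp_mul_nonneg.
  destruct (good a n s) eqn:Hgood; [lra|].
  destruct (Rlt_le_dec k1 (INR (nseeds (isseed s) n))) as [Hmany|Hk1].
  { enough (1 <= kproc a lu n (col s) (isseed s) * exp (- kthr a lu k1 n)) by lra.
    unfold kproc, kthr; rewrite Hlen, Nat.min_id; apply one_le_exp_shift; nra. }
  destruct (Rlt_le_dec (INR (nseeds (isseed s) m)) k0) as [Hfew|Hk0m].
  { enough (1 <= kproc a (- ll) m (col s) (isseed s) * exp (- kthr a (- ll) k0 m)) by lra.
    unfold kproc, kthr; rewrite Hlen, Nat.min_r by lia; apply one_le_exp_shift; nra. }
  destruct (not_good_witness a n s Hs Hgood) as [c [u [Hc [Hu [Hseed [Hcu Hcases]]]]]].
  assert (Hcn : (c < n)%nat).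
  { rewrite (wf_ncol _ Hs) in Hc; pose proof (nseeds_le (isseed s) (length (col s))); lia. }
  enough (1 <= g c) by (pose proof (sum_lt_ge_term g n c (fun j _ => Hg j) Hcn); lra).
  destruct Hcases as [[Hearly Hsmall] | [Hlate Hbig]].
  - assert (HSu : (S u < S m)%nat) by (apply INR_lt; rewrite (S_INR m); lra).
    pose proof (small_early_color_exceeds a n m k1 s c u Ha Hs Hlen Hm ltac:(lia)
                  Hseed Hcu Hk1 Hsmall).
    assert (0 <= cproc (fun _ => 1) 1 c (col s) (isseed s) * exp (- late_thr a n k0))
      by apply exp_mul_nonneg.
    unfold g; lra.
  - assert (HSu : (m < S u)%nat) by (apply INR_lt; lra).
    pose proof (large_late_color_exceeds a n m k0 s c u Hs Hlen ltac:(lia) ltac:(lia)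
                  Hcu Hk0 Hk0m Hlate Hbig).
    assert (0 <= cproc (fun v => 1 - p_new a (S v)) (- 2) c (col s) (isseed s)
                   * exp (- early_thr a n m k1)) by apply exp_mul_nonneg.
    unfold g; lra.
Qed.

Lemma expect_gen_kproc_le1 a d k l m : 0 < a -> (1 <= d)%nat -> (2 <= m)%nat ->
  expect (gen a d k) (fun s => kproc a l m (col s) (isseed s)) <= 1.
Proof.
  intros Ha Hd Hm; eapply Rle_trans; [apply gen_supermartingale; auto|].
  - intros; apply kproc_supermartingale; auto.
  - unfold kproc; destruct m as [|[|m]]; try lia.
    simpl; unfold seed_prob; simpl; apply Req_le.
    transitivity (exp 0); [f_equal; ring | apply exp_0].
Qed.

Lemma expect_gen_cproc_le1 a d k w l c : 0 < a -> (1 <= d)%nat ->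
  (forall v, (2 <= v)%nat -> (exp l - 1) * (1 - p_new a (S v)) <= (exp l - 1) * w v) ->
  expect (gen a d k) (fun s => cproc w l c (col s) (isseed s)) <= 1.
Proof.
  intros Ha Hd Hw; eapply Rle_trans; [apply gen_supermartingale; auto|].
  - intros; apply cproc_supermartingale; auto.
  - unfold cproc, nonseed_count, color_rate; simpl; apply Req_le.
    transitivity (exp 0); [f_equal; ring | apply exp_0].
Qed.

Definition bad_prob_bound (a : R) (n m : nat) (k0 k1 lu ll : R) : R :=
  exp (- kthr a lu k1 n) + exp (- kthr a (- ll) k0 m) +
  INR n * (exp (- late_thr a n k0) + exp (- early_thr a n m k1)).

Lemma prob_good_ge a d n m k0 k1 lu ll : 0 < a -> (1 <= d)%nat -> (2 <= m <= n)%nat ->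
  INR m <= T2 a n < INR m + 1 -> 0 < k0 -> 0 < lu -> 0 < ll ->
  1 - bad_prob_bound a n m k0 k1 lu ll <= prob (SModel n a d) (good a n).
Proof.
  intros Ha Hd Hm HT Hk0 Hlu Hll; unfold SModel.
  destruct (gen_wf a d (n - 2) Ha Hd) as [Hnn [Hmass Hsupp]].
  set (G := gen a d (n - 2)) in *.
  assert (Hsplit : expect G (fun s => if good a n s then 1 else 0)
                   + expect G (fun s => if good a n s then 0 else 1) = 1).
  { rewrite <- expect_plus, <- Hmass; apply expect_ext; intros s _; destruct (good a n s); lra. }
  assert (Hbad : expect G (fun s => if good a n s then 0 else 1)
                 <= expect G (fun s => bad_bound a n m k0 k1 lu ll (col s) (isseed s))).
  { apply expect_le; auto; intros s Hs; destruct (Hsupp s Hs) as [Hwf Hlen].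
    apply not_good_le_bad_bound; auto; lia. }
  assert (Hexp : expect G (fun s => bad_bound a n m k0 k1 lu ll (col s) (isseed s))
                 <= bad_prob_bound a n m k0 k1 lu ll).
  { unfold bad_bound, bad_prob_bound; rewrite !expect_plus, expect_sum_lt, !expect_scal_r.
    rewrite <- sum_lt_const.
    assert (Hpos : forall x, 0 < exp x) by apply exp_pos.
    assert (expect G (fun s => kproc a lu n (col s) (isseed s)) <= 1)
      by (apply expect_gen_kproc_le1; auto; lia).
    assert (expect G (fun s => kproc a (- ll) m (col s) (isseed s)) <= 1)
      by (apply expect_gen_kproc_le1; auto; lia).
    pose proof (Hpos (- kthr a lu k1 n)); pose proof (Hpos (- kthr a (- ll) k0 m)).
    apply Rplus_le_compat; [nra|].
    apply sum_lt_le; intros c _; rewrite expect_plus, !expect_scal_r.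
    assert (expect G (fun s => cproc (fun _ => 1) 1 c (col s) (isseed s)) <= 1).
    { apply expect_gen_cproc_le1; auto; intros v Hv.
      pose proof (p_new_bounds a (S v) Ha ltac:(lia)); pose proof (exp_ineq1_le 1); nra. }
    assert (expect G (fun s => cproc (fun v => 1 - p_new a (S v)) (-2) c (col s) (isseed s)) <= 1)
      by (apply expect_gen_cproc_le1; auto; intros; lra).
    pose proof (Hpos (- late_thr a n k0)); pose proof (Hpos (- early_thr a n m k1)); nra. }
  rewrite prob_expect; lra.
Qed.

Lemma exp_le_inv_1m x : x < 1 -> exp x <= / (1 - x).
Proof.
  intros H; pose proof (exp_ineq1_le (- x)); pose proof (exp_pos x).
  assert (exp x * exp (- x) = 1) by (rewrite <- exp_plus, Rplus_opp_r; apply exp_0).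
  apply (Rmult_le_reg_r (1 - x)); [lra|]; rewrite Rinv_l by lra; nra.
Qed.

Lemma exp_neg_le_inv x : 0 < x -> exp (- x) <= / x.
Proof.
  intros H; pose proof (exp_ineq1_le x); pose proof (exp_pos (- x)).
  assert (exp x * exp (- x) = 1) by (rewrite <- exp_plus, Rplus_opp_r; apply exp_0).
  apply (Rmult_le_reg_r x); [lra|]; rewrite Rinv_l by lra; nra.
Qed.

Lemma exp_neg_le_inv_1p x : 0 <= x -> exp (- x) <= / (1 + x).
Proof.
  intros H; pose proof (exp_ineq1_le x); pose proof (exp_pos (- x)).
  assert (exp x * exp (- x) = 1) by (rewrite <- exp_plus, Rplus_opp_r; apply exp_0).
  apply (Rmult_le_reg_r (1 + x)); [lra|]; rewrite Rinv_l by lra; nra.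
Qed.

Lemma ln_le_sub1 x : 0 < x -> ln x <= x - 1.
Proof.
  intros H; rewrite <- (ln_exp (x - 1)); apply ln_le_compat; auto.
  pose proof (exp_ineq1_le (x - 1)); lra.
Qed.

Lemma ln_le_2sqrt x : 0 < x -> ln x <= 2 * sqrt x.
Proof.
  intros H; assert (Hs : 0 < sqrt x) by (apply sqrt_lt_R0; auto).
  replace x with (sqrt x * sqrt x) at 1 by (apply sqrt_sqrt; lra).
  rewrite ln_mult by auto; pose proof (ln_le_sub1 (sqrt x) Hs); lra.
Qed.

Lemma inv_le_of_ge c x eps : 0 < c -> 0 < eps -> c / eps <= x -> / x <= eps / c.
Proof.
  intros Hc He H; assert (0 < c / eps) by (apply Rdiv_pos_pos; lra).
  replace (eps / c) with (/ (c / eps)) by (field; lra); apply Rinv_le_contravar; auto.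
Qed.

Lemma Rmax_le_split x y z : Rmax x y <= z -> x <= z /\ y <= z.
Proof. intros H; pose proof (Rmax_l x y); pose proof (Rmax_r x y); split; lra. Qed.

Lemma Rpower_neg_antimono x y a : 0 < x <= y -> 0 <= a -> Rpower y (- a) <= Rpower x (- a).
Proof.
  intros Hxy Ha; unfold Rpower; apply exp_le_compat.
  assert (ln x <= ln y) by (apply ln_le_compat; lra); nra.
Qed.

Lemma p_new_le_inv_ln a i : 1 <= a -> (3 <= i)%nat -> p_new a i <= / ln (INR i).
Proof.
  intros Ha Hi; assert (H1 : 1 <= ln (INR i)) by (apply ln_ge1, INR_ge3; auto).
  unfold p_new, Rpower; rewrite <- (exp_ln (/ ln (INR i))) by (apply Rinv_0_lt_compat; lra).
  apply exp_le_compat; rewrite ln_Rinv by lra.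
  assert (0 <= ln (ln (INR i))) by (rewrite <- ln_1; apply ln_le_compat; lra); nra.
Qed.

Lemma sum_lt_indicator_lt_le M n : 0 <= M ->
  sum_lt (fun v => if Rlt_dec (INR (S v)) M then 1 else 0) n <= M.
Proof.
  intros HM.
  assert (Hn : forall n, sum_lt (fun v => if Rlt_dec (INR (S v)) M then 1 else 0) n <= INR n).
  { induction n0; [simpl; lra|]; cbn [sum_lt]; rewrite S_INR; destruct (Rlt_dec _ _); lra. }
  induction n; [simpl; lra|]; cbn [sum_lt].
  destruct (Rlt_dec (INR (S n)) M) as [Hlt|]; [specialize (Hn n); rewrite S_INR in Hlt|]; lra.
Qed.

Lemma Rpower_neg_3a_le a t : 1 < a -> t = 1 - / (3 * a + 1) -> Rpower t (- a) <= 3 / 2.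
Proof.
  intros Ha ->; unfold Rpower.
  assert (Hi : 0 < / (3 * a)) by (apply Rinv_0_lt_compat; lra).
  assert (Hln : - ln (1 - / (3 * a + 1)) <= / (3 * a)).
  { replace (1 - / (3 * a + 1)) with (/ (1 + / (3 * a))) by (field; lra).
    rewrite ln_Rinv by lra; pose proof (ln_le_sub1 (1 + / (3 * a)) ltac:(lra)); lra. }
  apply Rle_trans with (exp (/ 3)); [apply exp_le_compat|].
  - replace (- a * ln (1 - / (3 * a + 1))) with (a * - ln (1 - / (3 * a + 1))) by ring.
    apply Rle_trans with (a * / (3 * a)); [apply Rmult_le_compat_l; lra | right; field; lra].
  - eapply Rle_trans; [apply exp_le_inv_1m; lra | right; field].
Qed.

(* Nodes up to [n^theta] contribute at most [n^theta]; beyond, [p_new] is at most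
   [(theta ln n)^-a <= 3/2 (ln n)^-a]. *)
Lemma sum_seed_prob_le a n : 1 < a -> (3 <= n)%nat ->
  sum_lt (seed_prob a) n
    <= exp ((1 - / (3 * a + 1)) * ln (INR n)) + 3 / 2 * (INR n * Rpower (ln (INR n)) (- a)).
Proof.
  intros Ha Hn; set (L := ln (INR n)); set (th := 1 - / (3 * a + 1)); set (M := exp (th * L)).
  assert (HL : 1 <= L) by (apply ln_ge1, INR_ge3; auto).
  assert (Hth : 0 < th < 1).
  { unfold th; assert (0 < / (3 * a + 1) < 1); [|lra].
    split; [apply Rinv_0_lt_compat; lra | rewrite <- Rinv_1; apply Rinv_lt_contravar; lra]. }
  assert (HRL : 0 < Rpower L (- a)) by apply exp_pos.
  apply Rle_trans with
    (sum_lt (fun v => (if Rlt_dec (INR (S v)) M then 1 else 0) + 3 / 2 * Rpower L (- a)) n).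
  - apply sum_lt_le; intros v Hv; unfold seed_prob.
    destruct (Nat.leb_spec 2 v); [|destruct (Rlt_dec _ _); lra].
    pose proof (p_new_bounds a (S v) ltac:(lra) ltac:(lia)).
    destruct (Rlt_dec (INR (S v)) M) as [|Hge]; [lra|].
    assert (HlnSv : th * L <= ln (INR (S v))).
    { rewrite <- (ln_exp (th * L)); apply ln_le_compat; [apply exp_pos | unfold M in Hge; lra]. }
    unfold p_new; eapply Rle_trans; [apply (Rpower_neg_antimono (th * L)); nra|].
    rewrite <- Rpower_mult_distr by lra.
    pose proof (Rpower_neg_3a_le a th Ha eq_refl); nra.
  - rewrite sum_lt_plus, sum_lt_const.
    pose proof (sum_lt_indicator_lt_le M n ltac:(left; apply exp_pos)); fold L; lra.
Qed.

Lemma sum_seed_prob_ge a n m : 0 < a -> (3 <= n)%nat -> (2 <= m <= n)%nat ->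
  INR (m - 2) * Rpower (ln (INR n)) (- a) <= sum_lt (seed_prob a) m.
Proof.
  intros Ha Hn Hm; apply sum_lt_ge_tail; intros v Hv; unfold seed_prob.
  - destruct (Nat.leb_spec 2 v); [apply p_new_bounds; auto; lia | lra].
  - rewrite (proj2 (Nat.leb_le 2 v)) by lia; fold (p_new a n); apply p_new_antimono; auto; lia.
Qed.

Definition T2_floor (a : R) (n : nat) : nat := (Z.to_nat (up (T2 a n)) - 1)%nat.

Lemma T2_floor_spec a n : 0 <= T2 a n -> INR (T2_floor a n) <= T2 a n < INR (T2_floor a n) + 1.
Proof.
  intros H; unfold T2_floor; destruct (archimed (T2 a n)) as [H1 H2].
  assert (Hz : (0 < up (T2 a n))%Z) by (apply lt_IZR; lra).
  rewrite minus_INR by lia; rewrite INR_IZR_INZ, Z2Nat.id by lia; simpl; lra.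
Qed.

Section Asymptotics.

Variables (a eps : R) (n : nat).
Hypotheses (Ha : 1 < a) (Heps : 0 < eps) (Hn : (60 <= n)%nat).
Let L := ln (INR n).
Hypotheses (HL11 : 11 <= L) (HLa : 200 <= Rpower L (a - 1))
  (HlnL : a * ln L + ln 10 <= L / (3 * a + 1)) (HlnL2 : a * ln L <= L / 2)
  (HLeps : 2000 / eps <= L).
(* The number of colors is of order [X]. *)
Let X := INR n * Rpower L (- a).
Let m := T2_floor a n.

Lemma INR_n_ge60 : 60 <= INR n.
Proof. apply le_INR in Hn; simpl in Hn; lra. Qed.

Lemma INR_n_exp : INR n = exp L.
Proof. unfold L; rewrite exp_ln; auto; pose proof INR_n_ge60; lra. Qed.

Lemma X_exp : X = exp (L - a * ln L).
Proof. unfold X; rewrite INR_n_exp; unfold Rpower; rewrite <- exp_plus; f_equal; ring. Qed.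

Lemma X_ge_half_L : L / 2 <= X.
Proof.
  rewrite X_exp; eapply Rle_trans; [|apply exp_le_compat with (x := L / 2); lra].
  pose proof (exp_ineq1_le (L / 2)); lra.
Qed.

Lemma T2_bounds : 19 / 20 * INR n <= T2 a n <= INR n.
Proof.
  assert (Hd : 0 < delta1 a n <= / 20).
  { unfold delta1; fold L; split; [apply Rdiv_pos_pos; lra|].
    unfold Rdiv; apply (Rmult_le_reg_r (Rpower L (a - 1))); [lra|].
    rewrite Rmult_assoc, Rinv_l by lra; lra. }
  unfold T2; pose proof (pos_INR n); split; nra.
Qed.

Lemma T2_floor_bounds :
  INR m <= T2 a n < INR m + 1 /\ (2 <= m <= n)%nat /\ 19 / 20 * INR n - 1 <= INR m.
Proof.
  pose proof T2_bounds; pose proof INR_n_ge60.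
  pose proof (T2_floor_spec a n ltac:(lra)) as Hm; fold m in Hm.
  split; [auto|]; split; [|lra]; split.
  - assert (INR 1 < INR m) by (simpl; lra); apply INR_lt in H1; lia.
  - apply INR_le; lra.
Qed.

Lemma n_sub_T2 : INR n - T2 a n = 10 * L * X.
Proof.
  unfold T2, delta1, X; fold L.
  assert (Hshift : Rpower L (a - 1) * Rpower L (- a) * L = 1).
  { rewrite <- Rpower_plus; replace (a - 1 + - a) with (- (1)) by ring.
    rewrite Rpower_Ropp, Rpower_1 by lra; field; lra. }
  assert (0 < Rpower L (a - 1)) by apply exp_pos.
  apply (Rmult_eq_reg_r (Rpower L (a - 1))); [|lra].
  transitivity (10 * INR n); [field; lra|].
  transitivity (10 * INR n * (Rpower L (a - 1) * Rpower L (- a) * L)); [rewrite Hshift|]; ring.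
Qed.

Lemma sum_seed_prob_n_le : sum_lt (seed_prob a) n <= 16 / 10 * X.
Proof.
  eapply Rle_trans; [apply sum_seed_prob_le; auto; lia|]; fold L X.
  enough (exp ((1 - / (3 * a + 1)) * L) <= / 10 * X) by lra.
  rewrite X_exp; replace (/ 10) with (exp (- ln 10)) by (rewrite exp_Ropp, exp_ln; lra).
  rewrite <- exp_plus; apply exp_le_compat.
  replace ((1 - / (3 * a + 1)) * L) with (L - L / (3 * a + 1)) by (field; lra); lra.
Qed.

Lemma sum_seed_prob_m_ge : 9 / 10 * X <= sum_lt (seed_prob a) m.
Proof.
  destruct T2_floor_bounds as [_ [Hm Hm2]]; pose proof INR_n_ge60.
  eapply Rle_trans; [|apply (sum_seed_prob_ge a n m); lra || lia]; fold L X.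
  rewrite minus_INR by lia; simpl (INR 2).
  assert (0 < Rpower L (- a)) by apply exp_pos; unfold X; nra.
Qed.

Lemma p_new_T2_floor_le : p_new a (S m) <= / 10.
Proof.
  destruct T2_floor_bounds as [_ [Hm Hm2]]; pose proof INR_n_ge60.
  eapply Rle_trans; [apply p_new_le_inv_ln; [lra | lia]|].
  apply Rinv_le_contravar; [lra|].
  assert (ln 2 <= 1) by (pose proof (ln_le_sub1 2); lra).
  assert (Hln : ln (INR n / 2) <= ln (INR (S m))) by (apply ln_le_compat; rewrite ?S_INR; lra).
  unfold Rdiv in Hln; rewrite ln_mult, ln_Rinv in Hln by (try apply Rinv_0_lt_compat; lra).
  fold L in Hln; lra.
Qed.

Lemma X_inv_le : / X <= eps / 1000.
Proof. apply inv_le_of_ge; try lra; pose proof X_ge_half_L; lra. Qed.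

Lemma L_inv_le : / L <= eps / 2000.
Proof. apply inv_le_of_ge; lra. Qed.

Lemma many_colors_term_le : exp (- kthr a (/ 10) (2 * X) n) <= 57 / 1000 * eps.
Proof.
  pose proof X_ge_half_L; pose proof sum_seed_prob_n_le; pose proof X_inv_le.
  assert (exp (/ 10) <= 10 / 9) by (eapply Rle_trans; [apply exp_le_inv_1m; lra | right; field]).
  assert (0 <= sum_lt (seed_prob a) n).
  { apply sum_lt_nonneg; intros k _; unfold seed_prob.
    destruct (Nat.leb_spec 2 k); [apply p_new_bounds; lra || lia | lra]. }
  assert (Hthr : X / 45 - / 5 <= kthr a (/ 10) (2 * X) n).
  { unfold kthr; pose proof (exp_ineq1_le (/ 10)); nra. }
  apply Rle_trans with (exp (/ 5) * exp (- (X / 45))).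
  { rewrite <- exp_plus; apply exp_le_compat; lra. }
  assert (exp (/ 5) <= 5 / 4) by (eapply Rle_trans; [apply exp_le_inv_1m; lra | right; field]).
  assert (exp (- (X / 45)) <= 45 * / X)
    by (eapply Rle_trans; [apply exp_neg_le_inv; lra | right; field; lra]).
  pose proof (exp_pos (- (X / 45))); nra.
Qed.

Lemma few_colors_term_le : exp (- kthr a (- / 10) (3 / 4 * X) m) <= 15 / 100 * eps.
Proof.
  pose proof X_ge_half_L; pose proof sum_seed_prob_m_ge; pose proof X_inv_le.
  assert (exp (- / 10) <= 10 / 11)
    by (eapply Rle_trans; [apply exp_neg_le_inv_1p; lra | right; field]).
  assert (Hthr : X / 150 <= kthr a (- / 10) (3 / 4 * X) m) by (unfold kthr; nra).
  apply Rle_trans with (exp (- (X / 150))); [apply exp_le_compat; lra|].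
  eapply Rle_trans; [apply exp_neg_le_inv; lra|].
  replace (/ (X / 150)) with (150 * / X) by (field; lra); lra.
Qed.

Lemma late_term_le : INR n * exp (- late_thr a n (3 / 4 * X)) <= eps / 100.
Proof.
  pose proof X_ge_half_L; pose proof L_inv_le; pose proof exp_le_3.
  assert (Hthr : 10 / 3 * L - 1 <= late_thr a n (3 / 4 * X)).
  { unfold late_thr; rewrite n_sub_T2.
    replace (10 * L * X / (3 / 4 * X)) with (40 / 3 * L) by (field; lra).
    pose proof (exp_ineq1_le 1); fold L; nra. }
  rewrite INR_n_exp, <- exp_plus.
  apply Rle_trans with (exp 1 * exp (- (7 / 3 * L))).
  { rewrite <- exp_plus; apply exp_le_compat; lra. }
  assert (exp (- (7 / 3 * L)) <= 3 / 7 * / L)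
    by (eapply Rle_trans; [apply exp_neg_le_inv; lra | right; field; lra]).
  pose proof (exp_pos (- (7 / 3 * L))); pose proof (exp_pos 1); nra.
Qed.

Lemma early_term_le : INR n * exp (- early_thr a n m (2 * X)) <= eps / 100.
Proof.
  pose proof X_ge_half_L; pose proof L_inv_le; pose proof p_new_T2_floor_le.
  destruct T2_floor_bounds as [Hms [Hm _]].
  assert (He2 : exp (- 2) <= / 4).
  { replace (- 2) with (- (1) + - (1)) by ring; rewrite exp_plus.
    assert (exp (- (1)) <= / 2)
      by (eapply Rle_trans; [apply exp_neg_le_inv_1p; lra | right; field]).
    pose proof (exp_pos (- (1))); nra. }
  assert (Hnm : 10 * L * X <= INR (n - m)) by (rewrite minus_INR by lia; pose proof n_sub_T2; lra).
  assert (Hq : 9 / 2 * L <= INR (n - m) * ((1 - p_new a (S m)) / (2 * X))).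
  { apply Rle_trans with (10 * L * X * ((9 / 10) / (2 * X))); [right; field; lra|].
    apply Rmult_le_compat; [nra | apply Rmult_le_pos; [lra | apply Rinv_nonneg; lra] | auto |].
    unfold Rdiv; apply Rmult_le_compat_r; [apply Rinv_nonneg | ]; lra. }
  assert (Hthr : 11 / 8 * L <= early_thr a n m (2 * X)) by (unfold early_thr; fold L; nra).
  rewrite INR_n_exp, <- exp_plus.
  apply Rle_trans with (exp (- (3 / 8 * L))); [apply exp_le_compat; lra|].
  eapply Rle_trans; [apply exp_neg_le_inv; lra|].
  replace (/ (3 / 8 * L)) with (8 / 3 * / L) by (field; lra); lra.
Qed.

Lemma bad_prob_bound_le : bad_prob_bound a n m (3 / 4 * X) (2 * X) (/ 10) (/ 10) <= eps.
Proof.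
  pose proof many_colors_term_le; pose proof few_colors_term_le.
  pose proof late_term_le; pose proof early_term_le.
  unfold bad_prob_bound; lra.
Qed.

End Asymptotics.

Definition log_threshold (a eps : R) : R :=
  Rmax (Rmax 11 (exp (200 / (a - 1))))
       (Rmax (Rmax ((4 * a * (3 * a + 1)) ^ 2) (20 * (3 * a + 1))) (2000 / eps)).

Lemma log_threshold_spec a eps L : 1 < a -> log_threshold a eps <= L ->
  11 <= L /\ 200 <= Rpower L (a - 1) /\ a * ln L + ln 10 <= L / (3 * a + 1) /\
  a * ln L <= L / 2 /\ 2000 / eps <= L.
Proof.
  intros Ha H; unfold log_threshold in H.
  apply Rmax_le_split in H
    as [[HL11 HLexp]%Rmax_le_split [[HLsq HL20]%Rmax_le_split HLeps]%Rmax_le_split].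
  assert (HRp : 200 <= Rpower L (a - 1)).
  { assert (200 / (a - 1) <= ln L)
      by (rewrite <- (ln_exp (200 / (a - 1))); apply ln_le_compat; [apply exp_pos | auto]).
    assert (200 <= (a - 1) * ln L).
    { apply Rle_trans with ((a - 1) * (200 / (a - 1))); [right; field; lra|].
      apply Rmult_le_compat_l; lra. }
    unfold Rpower; pose proof (exp_ineq1_le ((a - 1) * ln L)); lra. }
  assert (Hsq : 4 * a * (3 * a + 1) <= sqrt L).
  { rewrite <- (sqrt_pow2 (4 * a * (3 * a + 1))) by nra; apply sqrt_le_1_alt; lra. }
  assert (HsqL : sqrt L * sqrt L = L) by (apply sqrt_sqrt; lra).
  assert (Hln : ln L <= 2 * sqrt L) by (apply ln_le_2sqrt; lra).
  set (h := L / (2 * (3 * a + 1))).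
  assert (Hh : h * (2 * (3 * a + 1)) = L) by (unfold h; field; lra).
  assert (Ha1 : a * ln L <= h).
  { apply Rle_trans with (a * (2 * sqrt L)); [apply Rmult_le_compat_l; lra|].
    apply (Rmult_le_reg_r (2 * (3 * a + 1))); [lra|]; rewrite Hh.
    assert (0 <= (sqrt L - 4 * a * (3 * a + 1)) * sqrt L)
      by (apply Rmult_le_pos; [lra | apply sqrt_pos]).
    nra. }
  assert (ln 10 <= 9) by (pose proof (ln_le_sub1 10); lra).
  assert (9 <= h) by (apply (Rmult_le_reg_r (2 * (3 * a + 1))); [lra|]; rewrite Hh; lra).
  assert (h + h = L / (3 * a + 1)) by (unfold h; field; lra).
  assert (h <= L / 2)
    by (unfold h, Rdiv; apply Rmult_le_compat_l; [lra | apply Rinv_le_contravar; lra]).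
  repeat split; lra.
Qed.

Lemma ln_INR_eventually_ge x : exists N, forall n, (N <= n)%nat -> x <= ln (INR n).
Proof.
  exists (Z.to_nat (up (exp x))); intros n Hn.
  destruct (archimed (exp x)) as [H1 _].
  assert (Hup : (0 <= up (exp x))%Z) by (apply le_IZR; pose proof (exp_pos x); lra).
  assert (exp x <= INR n).
  { apply Rle_trans with (INR (Z.to_nat (up (exp x)))); [|apply le_INR; auto].
    rewrite INR_IZR_INZ, Z2Nat.id by lia; lra. }
  rewrite <- (ln_exp x); apply ln_le_compat; [apply exp_pos | auto].
Qed.

Theorem lemma4 (a : R) (d : nat) :
  1 < a -> (4 <= d)%nat ->
  forall eps : R, 0 < eps ->
  exists N : nat, forall n : nat, (N <= n)%nat ->
    1 - eps <= prob (SModel n a d) (good a n).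
Proof.
  intros Ha Hd eps Heps.
  destruct (ln_INR_eventually_ge (log_threshold a eps)) as [N HN].
  exists (Nat.max 60 N); intros n Hn.
  destruct (log_threshold_spec a eps (ln (INR n)) Ha (HN n ltac:(lia)))
    as [H11 [Ha1 [Hln [Hln2 Heps']]]].
  set (X := INR n * Rpower (ln (INR n)) (- a)).
  assert (HX : 0 < X) by (apply Rmult_lt_0_compat; [apply lt_0_INR; lia | apply exp_pos]).
  destruct (T2_floor_bounds a n ltac:(lia) Ha1) as [HT [Hm _]].
  pose proof (bad_prob_bound_le a eps n Ha Heps ltac:(lia) H11 Ha1 Hln Hln2 Heps') as Hbound.
  pose proof (prob_good_ge a d n (T2_floor a n) (3 / 4 * X) (2 * X) (/ 10) (/ 10)
                ltac:(lra) ltac:(lia) Hm HT ltac:(lra) ltac:(lra) ltac:(lra)).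
  fold X in Hbound; lra.
Qed.
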